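(* Let $\kappa$ be an ordinal of uncountable cofinality and let $Z$, $Z_X$, $Z_Y$ be as described in the context. Let $z: \alpha \to \alpha$ be a morphism in $Z$. If there exist morphisms $u: \alpha \to \beta$ and $v: \alpha \to \gamma$ in $Z$ such that $u z u^{-1}$ lies in $Z_X$ and $v z v^{-1}$ lies in $Z_Y$, then $z = \mathrm{id}_\alpha$.
   Context: For an ordinal $\alpha \ge 2$ let $G_\alpha$ be the free group on the set $\alpha$; for $\gamma \le \alpha$ let $D^\gamma_\alpha: G_\gamma \to G_\alpha$ be the natural inclusion. Let $Z$ be the groupoid with object set $[2,\kappa)$ generated by: the elements of $G_\alpha$ as automorphisms of the object $\alpha$; and, for each pair $\alpha \neq \beta$ in $[2,\kappa)$, a morphism $y^\beta_\alpha: \beta \to \alpha$; subject to the relations of each group $G_\alpha$ and the relations $y^\beta_\alpha \, D^{\varepsilon}_\beta(a)\, y^\alpha_\beta = D^{\varepsilon}_\alpha(a)$ for all $a \in G_\varepsilon$, $\varepsilon = \min(\alpha,\beta)$ (so $y^\alpha_\beta = (y^\beta_\alpha)^{-1}$). (This is the fundamental groupoid of the graph of groups with vertex groups $G_\alpha$, edges $y^\beta_\alpha$, edge groups $G_{\min(\alpha,\beta)}$ and inclusions as edge maps.) $Z_X$ is the subgroupoid of $Z$ consisting of the morphisms in the image of some vertex group $G_\alpha$. $Z_Y$ is the subgroupoid of $Z$ generated by the edges $y^\beta_\alpha$. *)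

From Stdlib Require Import List Relations Bool.
Import ListNotations.
Set Implicit Arguments.

(* An ordinal kappa is represented by the well-ordered set of ordinals < kappa. *)
Record wellOrder := WellOrder {
  wo_car :> Type;
  wo_lt : wo_car -> wo_car -> Prop;
  wo_wf : well_founded wo_lt;
  wo_irrefl : forall x, ~ wo_lt x x;
  wo_trans : forall x y z, wo_lt x y -> wo_lt y z -> wo_lt x z;
  wo_total : forall x y, wo_lt x y \/ x = y \/ wo_lt y x }.

(* cf(kappa) > omega: kappa > 0 and every countable subset is strictly bounded. *)
Definition uncountable_cofinality (K : wellOrder) : Prop :=
  inhabited K /\ forall f : nat -> K, exists k : K, forall n, wo_lt K (f n) k.

Section Groupoid.
Variable K : wellOrder.
Local Notation lt := (wo_lt K).

Definition ge2 (a : K) : Prop := exists x y, lt x y /\ lt y a.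

(* Generators of the groupoid Z:
   Gen a xi b : a -> a is the free generator xi (xi < a) of G_a, inverted if b = false;
   Edge a b   : b -> a is the edge morphism y^b_a (a <> b). *)
Inductive letter : Type :=
| Gen (a xi : K) (sgn : bool)
| Edge (a b : K).

Definition valid (l : letter) : Prop :=
  match l with
  | Gen a xi _ => ge2 a /\ lt xi a
  | Edge a b => ge2 a /\ ge2 b /\ a <> b
  end.

Definition src (l : letter) : K := match l with Gen a _ _ => a | Edge _ b => b end.
Definition tgt (l : letter) : K := match l with Gen a _ _ => a | Edge a _ => a end.

(* Words are written in composition order: x1 :: x2 :: ... means x1 o x2 o ...
   path_ok t s w : w is a well-formed path (morphism) s -> t. *)
Fixpoint path_ok (t s : K) (w : list letter) : Prop :=
  match w with
  | [] => t = s /\ ge2 s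
  | x :: w' => valid x /\ tgt x = t /\ path_ok (src x) s w'
  end.

(* D^eps_a : a word of G_eps (letters (xi, sign)) placed in G_a. *)
Definition at_vertex (a : K) (g : list (K * bool)) : list letter :=
  map (fun p => Gen a (fst p) (snd p)) g.

Inductive rel_base : list letter -> list letter -> Prop :=
| rel_free (a xi : K) (b : bool) : rel_base [Gen a xi b; Gen a xi (negb b)] []
| rel_edge (a b : K) (g : list (K * bool)) :
    (forall p, In p g -> lt (fst p) a /\ lt (fst p) b) ->
    rel_base (Edge a b :: at_vertex b g ++ [Edge b a]) (at_vertex a g).

Definition step (t s : K) (w w' : list letter) : Prop :=
  exists p q l r, rel_base l r /\ w = p ++ l ++ q /\ w' = p ++ r ++ q /\
    path_ok t s w /\ path_ok t s w'.

Definition hom_eq (t s : K) (w w' : list letter) : Prop :=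
  path_ok t s w /\ path_ok t s w' /\ clos_refl_sym_trans _ (step t s) w w'.

Definition inv_letter (l : letter) : letter :=
  match l with Gen a xi b => Gen a xi (negb b) | Edge a b => Edge b a end.

Definition inv_word (w : list letter) : list letter := rev (map inv_letter w).

(* Z_X: morphisms in the image of some vertex group G_a. *)
Definition inZX (t s : K) (w : list letter) : Prop :=
  exists (a : K) (g : list (K * bool)),
    (forall p, In p g -> lt (fst p) a) /\ hom_eq t s w (at_vertex a g).

Definition is_edge (l : letter) : Prop := match l with Edge _ _ => True | _ => False end.

(* Z_Y: subgroupoid generated by the edges y^b_a. *)
Definition inZY (t s : K) (w : list letter) : Prop :=
  exists e, (forall x, In x e -> is_edge x) /\ hom_eq t s w e.

End Groupoid.

From Stdlib Require Import List Relations ClassicalDescription.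
Import ListNotations.

(* Collapsing every edge to the identity and every vertex group G_a into the
   free group on K defines a functor from Z to that free group; we realise it
   as an action of words on freely reduced words (van der Waerden's trick).
   Edge words act trivially, and the action is faithful on each vertex group.
   Hence a loop conjugate into Z_Y acts trivially, so does any conjugate of it,
   and if that conjugate lies in Z_X it is the identity. *)

Section Paths.
Context {K : wellOrder}.

Lemma valid_ge2_tgt {x : letter K} : valid x -> ge2 K (tgt x).
Proof. destruct x; simpl; tauto. Qed.

Lemma valid_ge2_src {x : letter K} : valid x -> ge2 K (src x).
Proof. destruct x; simpl; tauto. Qed.

Lemma valid_inv_letter {x : letter K} : valid x -> valid (inv_letter x).
Proof. destruct x; simpl; intuition. Qed.

Lemma src_inv_letter (x : letter K) : src (inv_letter x) = tgt x.
Proof. now destruct x. Qed.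

Lemma tgt_inv_letter (x : letter K) : tgt (inv_letter x) = src x.
Proof. now destruct x. Qed.

Lemma path_ok_ge2_tgt {t s : K} {w : list (letter K)} : path_ok t s w -> ge2 K t.
Proof.
  destruct w as [|x w]; simpl.
  - intros [-> Hs]; exact Hs.
  - intros (Hx & <- & _); exact (valid_ge2_tgt Hx).
Qed.

Lemma path_ok_app {t m s : K} {w1 w2 : list (letter K)} :
  path_ok t m w1 -> path_ok m s w2 -> path_ok t s (w1 ++ w2).
Proof.
  revert t; induction w1 as [|x w1 IH]; simpl; intros t H1 H2.
  - now destruct H1 as [-> _].
  - destruct H1 as (Hx & Ht & H1); eauto.
Qed.

Lemma path_ok_letter {x : letter K} : valid x -> path_ok (tgt x) (src x) [x].
Proof. intros Hx; simpl; auto using valid_ge2_src. Qed.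

Lemma path_ok_inv_letter {x : letter K} :
  valid x -> path_ok (src x) (tgt x) [inv_letter x].
Proof.
  intros Hx; rewrite <- (tgt_inv_letter x), <- (src_inv_letter x).
  exact (path_ok_letter (valid_inv_letter Hx)).
Qed.

Lemma path_ok_inv_word {t s : K} {w : list (letter K)} :
  path_ok t s w -> path_ok s t (inv_word w).
Proof.
  revert t; induction w as [|x w IH]; simpl; intros t H.
  - now destruct H as [-> Hs].
  - destruct H as (Hx & <- & H).
    change (inv_word (x :: w)) with (inv_word w ++ [inv_letter x]).
    exact (path_ok_app (IH _ H) (path_ok_inv_letter Hx)).
Qed.

Lemma inv_word_involutive (w : list (letter K)) : inv_word (inv_word w) = w.
Proof.
  unfold inv_word; rewrite map_rev, rev_involutive, map_map.
  induction w as [|[a xi b|a b] w IH]; simpl; rewrite ?IH, ?Bool.negb_involutive; auto.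
Qed.

End Paths.

Section Morphisms.
Context {K : wellOrder}.

Lemma hom_eq_refl {t s : K} {w : list (letter K)} : path_ok t s w -> hom_eq t s w w.
Proof. intros; repeat split; auto; apply rst_refl. Qed.

Lemma hom_eq_sym {t s : K} {w w' : list (letter K)} : hom_eq t s w w' -> hom_eq t s w' w.
Proof. intros (? & ? & ?); repeat split; auto; now apply rst_sym. Qed.

Lemma hom_eq_trans {t s : K} {w1 w2 w3 : list (letter K)} :
  hom_eq t s w1 w2 -> hom_eq t s w2 w3 -> hom_eq t s w1 w3.
Proof. intros (? & _ & ?) (_ & ? & ?); repeat split; auto; eapply rst_trans; eauto. Qed.

Lemma hom_eq_rel {t s : K} (p : list (letter K)) {l r : list (letter K)}
  (q : list (letter K)) :
  rel_base l r -> path_ok t s (p ++ l ++ q) -> path_ok t s (p ++ r ++ q) ->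
  hom_eq t s (p ++ l ++ q) (p ++ r ++ q).
Proof. intros; repeat split; auto; apply rst_step; exists p, q, l, r; auto. Qed.

Lemma step_cong {t s t' s' : K} {p q w w' : list (letter K)} :
  path_ok t' t p -> path_ok s s' q -> step t s w w' ->
  step t' s' (p ++ w ++ q) (p ++ w' ++ q).
Proof.
  intros Hp Hq (p0 & q0 & l & r & Hlr & -> & -> & Hw & Hw').
  assert (Hpath : forall w, path_ok t s w -> path_ok t' s' (p ++ w ++ q))
    by (intros; exact (path_ok_app Hp (path_ok_app H Hq))).
  apply Hpath in Hw, Hw'; rewrite <- !app_assoc in Hw, Hw' |- *.
  exists (p ++ p0), (q0 ++ q), l, r; rewrite <- !app_assoc; auto.
Qed.

Lemma hom_eq_cong {t s t' s' : K} {p q w w' : list (letter K)} :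
  path_ok t' t p -> path_ok s s' q -> hom_eq t s w w' ->
  hom_eq t' s' (p ++ w ++ q) (p ++ w' ++ q).
Proof.
  intros Hp Hq (Hw & Hw' & Hc).
  split; [|split]; [exact (path_ok_app Hp (path_ok_app Hw Hq))
                   |exact (path_ok_app Hp (path_ok_app Hw' Hq))|].
  clear Hw Hw'; induction Hc.
  - exact (rst_step _ _ _ _ (step_cong Hp Hq H)).
  - apply rst_refl.
  - now apply rst_sym.
  - eapply rst_trans; eauto.
Qed.

Lemma rel_base_inv_letter (x : letter K) : rel_base [x; inv_letter x] [].
Proof.
  destruct x as [a xi b | a b].
  - apply rel_free.
  - exact (rel_edge K a b [] (fun p Hp => False_ind _ Hp)).
Qed.

Lemma hom_eq_app_inv_word {t s : K} {w : list (letter K)} :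
  path_ok t s w -> hom_eq t t (w ++ inv_word w) [].
Proof.
  revert t; induction w as [|x w IH]; simpl; intros t Hw.
  - destruct Hw as [-> Hs]; now apply hom_eq_refl.
  - destruct Hw as (Hx & <- & Hw).
    pose proof (path_ok_letter Hx) as Hl.
    pose proof (path_ok_inv_letter Hx) as Hl'.
    replace (x :: w ++ inv_word (x :: w))
      with ([x] ++ (w ++ inv_word w) ++ [inv_letter x])
      by (unfold inv_word; simpl; now rewrite !app_assoc).
    eapply hom_eq_trans; [exact (hom_eq_cong Hl Hl' (IH _ Hw))|].
    apply (hom_eq_rel [] [] (rel_base_inv_letter x)).
    + exact (path_ok_app Hl Hl').
    + simpl; auto using valid_ge2_tgt.
Qed.

Lemma hom_eq_inv_word_app {t s : K} {w : list (letter K)} :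
  path_ok t s w -> hom_eq s s (inv_word w ++ w) [].
Proof.
  intros Hw; rewrite <- (inv_word_involutive w) at 2.
  exact (hom_eq_app_inv_word (path_ok_inv_word Hw)).
Qed.

Lemma hom_eq_conj_nil {t s : K} {u z : list (letter K)} :
  path_ok t s u -> path_ok s s z ->
  hom_eq t t (u ++ z ++ inv_word u) [] -> hom_eq s s z [].
Proof.
  intros Hu Hz Hconj.
  pose proof (hom_eq_inv_word_app Hu) as Hcancel.
  pose proof (path_ok_inv_word Hu) as Hu'.
  assert (Hs : path_ok s s []) by (simpl; eauto using path_ok_ge2_tgt).
  apply (hom_eq_trans (w2 := (inv_word u ++ u) ++ z ++ (inv_word u ++ u))).
  - apply hom_eq_sym, (hom_eq_trans (w2 := [] ++ z ++ (inv_word u ++ u))).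
    + exact (hom_eq_cong Hs (path_ok_app Hz (path_ok_app Hu' Hu)) Hcancel).
    + pose proof (hom_eq_cong Hz Hs Hcancel) as Hright.
      simpl; now rewrite !app_nil_r in Hright.
  - replace ((inv_word u ++ u) ++ z ++ (inv_word u ++ u))
      with (inv_word u ++ (u ++ z ++ inv_word u) ++ u) by now rewrite !app_assoc.
    exact (hom_eq_trans (hom_eq_cong Hu' Hu Hconj) Hcancel).
Qed.

End Morphisms.

Section FreeAction.
Context {K : wellOrder}.

Definition inv_pair (x : K * bool) : K * bool := (fst x, negb (snd x)).

Lemma inv_pair_involutive (x : K * bool) : inv_pair (inv_pair x) = x.
Proof. destruct x; unfold inv_pair; simpl; now rewrite Bool.negb_involutive. Qed.

Fixpoint reduced (s : list (K * bool)) : Prop :=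
  match s with
  | x :: ((y :: _) as s') => y <> inv_pair x /\ reduced s'
  | _ => True
  end.

(* Left multiplication by the generator [x] on freely reduced words; equality
   on K is not decidable, so cancellation is decided classically. *)
Definition push (x : K * bool) (s : list (K * bool)) : list (K * bool) :=
  match s with
  | y :: s' => if excluded_middle_informative (y = inv_pair x) then s' else x :: s
  | [] => [x]
  end.

Lemma reduced_cons_inv {x : K * bool} {s : list (K * bool)} :
  reduced (x :: s) -> reduced s.
Proof. destruct s; simpl; tauto. Qed.

Lemma reduced_push (x : K * bool) {s : list (K * bool)} :
  reduced s -> reduced (push x s).
Proof.
  destruct s as [|y s]; simpl; auto; intros Hs.
  destruct excluded_middle_informative; simpl; auto.
  exact (reduced_cons_inv Hs).
Qed.

Lemma push_inv_pair (x : K * bool) {s : list (K * bool)} :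
  reduced s -> push (inv_pair x) (push x s) = s.
Proof.
  intros Hs; destruct s as [|y s]; simpl.
  - destruct excluded_middle_informative as [_|Hne]; auto.
    now rewrite inv_pair_involutive in Hne.
  - destruct excluded_middle_informative as [->|Hne].
    + destruct s as [|y' s]; simpl; auto.
      destruct excluded_middle_informative as [Hcanc|]; auto.
      exfalso; apply (proj1 Hs); exact Hcanc.
    + simpl; destruct excluded_middle_informative as [_|Hne']; auto.
      now rewrite inv_pair_involutive in Hne'.
Qed.

Lemma in_push {x y : K * bool} {s : list (K * bool)} :
  In y (push x s) -> y = x \/ In y s.
Proof.
  destruct s as [|z s]; simpl; [intuition|].
  destruct excluded_middle_informative; simpl; intuition.
Qed.

Definition reduce (g : list (K * bool)) : list (K * bool) := fold_right push [] g.

Definition act_letter (l : letter K) (s : list (K * bool)) : list (K * bool) :=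
  match l with
  | Gen _ _ xi b => push (xi, b) s
  | Edge _ _ _ => s
  end.

Definition act (w : list (letter K)) (s : list (K * bool)) : list (K * bool) :=
  fold_right act_letter s w.

Lemma act_app (w1 w2 : list (letter K)) (s : list (K * bool)) :
  act (w1 ++ w2) s = act w1 (act w2 s).
Proof. apply fold_right_app. Qed.

Lemma act_at_vertex (a : K) (g s : list (K * bool)) :
  act (at_vertex K a g) s = fold_right push s g.
Proof. induction g as [|[xi b] g IH]; simpl; congruence. Qed.

Lemma reduced_act (w : list (letter K)) {s : list (K * bool)} :
  reduced s -> reduced (act w s).
Proof. induction w as [|[] w IH]; simpl; auto using reduced_push. Qed.

Lemma act_inv_word (w : list (letter K)) {s : list (K * bool)} :
  reduced s -> act (inv_word w) (act w s) = s.
Proof.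
  revert s; induction w as [|x w IH]; simpl; intros s Hs; auto.
  unfold inv_word; simpl; rewrite act_app.
  destruct x as [a xi b|a b]; simpl; [|exact (IH _ Hs)].
  change (act (inv_word w) (push (inv_pair (xi, b)) (push (xi, b) (act w s))) = s).
  now rewrite (push_inv_pair (xi, b) (reduced_act w Hs)), IH.
Qed.

Lemma act_inv_word_r (w : list (letter K)) {s : list (K * bool)} :
  reduced s -> act w (act (inv_word w) s) = s.
Proof.
  intros Hs; rewrite <- (inv_word_involutive w) at 1.
  exact (act_inv_word (inv_word w) Hs).
Qed.

Lemma act_rel_base {l r : list (letter K)} {s : list (K * bool)} :
  rel_base l r -> reduced s -> act l s = act r s.
Proof.
  intros Hlr Hs; destruct Hlr as [a xi b|a b g _]; simpl.
  - rewrite <- (Bool.negb_involutive b) at 1; exact (push_inv_pair (xi, negb b) Hs).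
  - now rewrite act_app, !act_at_vertex.
Qed.

Lemma act_hom_eq {t s : K} {w w' : list (letter K)} {r : list (K * bool)} :
  hom_eq t s w w' -> reduced r -> act w r = act w' r.
Proof.
  intros (_ & _ & Hc) Hr; induction Hc as [w w' Hstep| | |]; auto; [|congruence].
  destruct Hstep as (p & q & l & l' & Hll' & -> & -> & _).
  rewrite !act_app; f_equal; exact (act_rel_base Hll' (reduced_act q Hr)).
Qed.

Definition acts_trivially (w : list (letter K)) : Prop :=
  forall s, reduced s -> act w s = s.

Lemma acts_trivially_hom_eq {t s : K} {w w' : list (letter K)} :
  hom_eq t s w w' -> acts_trivially w' -> acts_trivially w.
Proof. intros Hw Htriv r Hr; rewrite (act_hom_eq Hw Hr); exact (Htriv r Hr). Qed.

Lemma act_edges {e : list (letter K)} (s : list (K * bool)) :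
  (forall x, In x e -> is_edge x) -> act e s = s.
Proof.
  induction e as [|x e IH]; intros He; [reflexivity|].
  destruct x; [destruct (He _ (or_introl eq_refl))|].
  exact (IH (fun y Hy => He y (or_intror Hy))).
Qed.

Lemma inZY_acts_trivially {t : K} {w : list (letter K)} :
  inZY t t w -> acts_trivially w.
Proof.
  intros (e & He & Hw); apply (acts_trivially_hom_eq Hw).
  intros s _; exact (act_edges s He).
Qed.

Lemma acts_trivially_conj (v z : list (letter K)) :
  acts_trivially (v ++ z ++ inv_word v) <-> acts_trivially z.
Proof.
  unfold acts_trivially; split; intros Htriv s Hs.
  - assert (Hv : act v (act z s) = act v s).
    { specialize (Htriv _ (reduced_act v Hs)).
      now rewrite !act_app, (act_inv_word v Hs) in Htriv. }
    rewrite <- (act_inv_word v (reduced_act z Hs)), Hv.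
    exact (act_inv_word v Hs).
  - rewrite !act_app, (Htriv _ (reduced_act (inv_word v) Hs)).
    exact (act_inv_word_r v Hs).
Qed.

End FreeAction.

Section VertexGroups.
Context {K : wellOrder}.

Definition below (a : K) (g : list (K * bool)) : Prop :=
  forall p, In p g -> wo_lt K (fst p) a.

Lemma below_push {a : K} {x : K * bool} {s : list (K * bool)} :
  below a (x :: s) -> below a (push x s).
Proof. intros Hs p Hp; apply Hs; destruct (in_push Hp); simpl; auto. Qed.

Lemma below_reduce {a : K} {g : list (K * bool)} : below a g -> below a (reduce g).
Proof.
  induction g as [|x g IH]; intros Hg; simpl; [exact Hg|].
  apply below_push; intros p [<-|Hp]; [apply Hg; now left|].
  apply IH; auto; intros q Hq; apply Hg; now right.
Qed.

Lemma path_ok_at_vertex {a : K} {g : list (K * bool)} :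
  ge2 K a -> below a g -> path_ok a a (at_vertex K a g).
Proof.
  intros Ha; induction g as [|x g IH]; simpl; intros Hg; auto.
  repeat split; auto; [apply Hg; now left|].
  apply IH; intros p Hp; apply Hg; now right.
Qed.

Lemma hom_eq_at_vertex_push {a : K} {x : K * bool} {s : list (K * bool)} :
  ge2 K a -> below a (x :: s) ->
  hom_eq a a (at_vertex K a (x :: s)) (at_vertex K a (push x s)).
Proof.
  intros Ha Hs.
  pose proof (path_ok_at_vertex Ha (below_push Hs)) as Hpush.
  destruct s as [|y s]; [exact (hom_eq_refl Hpush)|].
  simpl in Hpush |- *; destruct excluded_middle_informative as [->|];
    [|exact (hom_eq_refl (path_ok_at_vertex Ha Hs))].
  apply (hom_eq_rel [] (at_vertex K a s) (rel_free K a (fst x) (snd x))); auto.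
  exact (path_ok_at_vertex Ha Hs).
Qed.

Lemma hom_eq_at_vertex_reduce {a : K} {g : list (K * bool)} :
  ge2 K a -> below a g -> hom_eq a a (at_vertex K a g) (at_vertex K a (reduce g)).
Proof.
  intros Ha; induction g as [|x g IH]; intros Hg.
  - exact (hom_eq_refl (path_ok_at_vertex Ha Hg)).
  - assert (Hg' : below a g) by (intros p Hp; apply Hg; now right).
    assert (Hx : below a [x]) by (intros p [<-|[]]; apply Hg; now left).
    apply (hom_eq_trans (w2 := at_vertex K a (x :: reduce g))).
    + pose proof (hom_eq_cong (path_ok_at_vertex Ha Hx) (q := []) (conj eq_refl Ha) (IH Hg'))
        as Hcong.
      simpl in Hcong; now rewrite !app_nil_r in Hcong.
    + apply hom_eq_at_vertex_push; auto.
      intros p [<-|Hp]; [apply Hg; now left|exact (below_reduce Hg' p Hp)].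
Qed.

Lemma inZX_acts_trivially {t : K} {w : list (letter K)} :
  inZX t t w -> acts_trivially w -> hom_eq t t w [].
Proof.
  intros (a & g & Hg & Hw) Htriv.
  assert (Hred : reduce g = []).
  { unfold reduce; rewrite <- (act_at_vertex a), <- (act_hom_eq (r := []) Hw I).
    exact (Htriv [] I). }
  destruct g as [|x g]; [exact Hw|].
  pose proof (proj1 (proj2 Hw)) as ((Ha & _) & <- & _).
  pose proof (hom_eq_at_vertex_reduce Ha Hg) as Hreduce.
  rewrite Hred in Hreduce; exact (hom_eq_trans Hw Hreduce).
Qed.

End VertexGroups.

Theorem lemma3p12 (K : wellOrder) (hK : uncountable_cofinality K)
  (a b c : K) (z u v : list (letter K)) :
  path_ok a a z ->          (* z : a -> a *)
  path_ok b a u ->          (* u : a -> b *)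
  path_ok c a v ->          (* v : a -> c *)
  inZX b b (u ++ z ++ inv_word u) ->
  inZY c c (v ++ z ++ inv_word v) ->
  hom_eq a a z [].
Proof.
  intros Hz Hu _ HX HY.
  apply (hom_eq_conj_nil Hu Hz), (inZX_acts_trivially HX).
  apply acts_trivially_conj, (acts_trivially_conj v).
  exact (inZY_acts_trivially HY).
Qed.
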